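(* Let $X(1),\dots,X(n)$ be UVs with values in $\mathscr{X}$ and $Y(1),\dots,Y(n)$ UVs with values in $\mathscr{Y}$ on a common sample space, and let $X(1:n)=(X(1),\dots,X(n))$, $Y(1:n)=(Y(1),\dots,Y(n))$. Assume $[\![X(1:n)]\!]=[\![X(1)]\!]\times\cdots\times[\![X(n)]\!]$ and, for every $x(1:n)\in[\![X(1:n)]\!]$, $[\![Y(1:n)|x(1:n)]\!]=[\![Y(1)|x(1)]\!]\times\cdots\times[\![Y(n)|x(n)]\!]$. Let $$0\le\delta<\min_{1\le i\le n,\ x(i)\in[\![X(i)]\!]}m_{\mathscr{Y}}([\![Y(i)|x(i)]\!]),$$ and assume either $(X(1:n),Y(1:n))\stackrel{d}{\leftrightarrow}(0,\delta^n)$ or $(X(1:n),Y(1:n))\stackrel{a}{\leftrightarrow}(1,\delta^n)$. For each $i$ let $[\![Y(i)|X(i)]\!]^*_\delta$ be a $\delta$-overlap family of $[\![Y(i)]\!]$, and let $\prod_{i=1}^n[\![Y(i)|X(i)]\!]^*_\delta=\{S_1\times\cdots\times S_n: S_i\in[\![Y(i)|X(i)]\!]^*_\delta\}$. Under the product uncertainty assumption, the following hold: (1) $\prod_{i=1}^n[\![Y(i)|X(i)]\!]^*_\delta$ is a covering of $[\![Y(1:n)]\!]$; (2) every $S\in\prod_{i=1}^n[\![Y(i)|X(i)]\!]^*_\delta$ is $\delta^n$-connected via $[\![Y(1:n)|X(1:n)]\!]$ and contains at least one conditional range $[\![Y(1:n)|x(1:n)]\!]$; (3) for every $x(1:n)\in[\![X(1:n)]\!]$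 there is $S\in\prod_{i=1}^n[\![Y(i)|X(i)]\!]^*_\delta$ with $[\![Y(1:n)|x(1:n)]\!]\subseteq S$; (4) for all $S_1,S_2\in\prod_{i=1}^n[\![Y(i)|X(i)]\!]^*_\delta$ (distinct), $m_{\mathscr{Y}}(S_1\cap S_2)/m_{\mathscr{Y}}([\![Y(1:n)]\!])\le\delta(\hat\delta(n))^{n-1}$, where $\hat\delta(n)=\max_{1\le i\le n,\ S\in[\![Y(i)|X(i)]\!]^*_\delta} m_{\mathscr{Y}}(S)/m_{\mathscr{Y}}([\![Y(i)]\!])$.
   Context: A UV is a map $U$ from a sample space $\Omega$ to a set; $[\![U]\!]=\{U(\omega)\}$; $[\![U|w]\!]=\{U(\omega):W(\omega)=w\}$, $[\![U|W]\!]=\{[\![U|w]\!]:w\in[\![W]\!]\}$; $X(1:n)(\omega)=(X(1)(\omega),\dots,X(n)(\omega))$. An uncertainty function on a set $\mathscr{U}$ is a map $m$ on subsets of $\mathscr{U}$ with $m(\emptyset)=0$, $0<m(S)<\infty$ for nonempty $S$, $\max\{m(S_1),m(S_2)\}\le m(S_1\cup S_2)$. Here $m_{\mathscr{X}}$ (resp. $m_{\mathscr{Y}}$) is defined on subsets of $\mathscr{X}^k$ (resp. $\mathscr{Y}^k$) for every $k\ge1$, is an uncertainty function on each, and $m_{\mathscr{Y}}(\mathscr{Y}^k)=1$ for all $k$. Product uncertainty assumption: for every $k$ and all $S_1,\dots,S_k\subseteq\mathscr{Y}$, $m_{\mathscr{Y}}(S_1\times\cdots\times S_k)=\prod_i m_{\mathscr{Y}}(S_i)$.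 Association: $\mathscr{A}(X;Y)=\{m_{\mathscr{X}}([\![X|y_1]\!]\cap[\![X|y_2]\!])/m_{\mathscr{X}}([\![X]\!]):y_1\ne y_2\in[\![Y]\!]\}\setminus\{0\}$, $\mathscr{A}(Y;X)=\{m_{\mathscr{Y}}([\![Y|x_1]\!]\cap[\![Y|x_2]\!])/m_{\mathscr{Y}}([\![Y]\!]):x_1\ne x_2\in[\![X]\!]\}\setminus\{0\}$. $\mathscr{A}\succ\delta$: all elements $>\delta$ (false for $\emptyset$); $\mathscr{A}\preceq\delta$: all elements $\le\delta$ (true for $\emptyset$). $(X,Y)\stackrel{d}{\leftrightarrow}(\delta_1,\delta_2)$ iff $\mathscr{A}(X;Y)\succ\delta_1,\mathscr{A}(Y;X)\succ\delta_2$; $(X,Y)\stackrel{a}{\leftrightarrow}(\delta_1,\delta_2)$ iff $\mathscr{A}(X;Y)\preceq\delta_1,\mathscr{A}(Y;X)\preceq\delta_2$. $\delta$-connectedness and overlap families: for UVs $U$ (with uncertainty function $m_{\mathscr{U}}$) and $W$, $u,u'\in[\![U]\!]$ are $\delta$-connected via $[\![U|W]\!]$ if there are $w_1,\dots,w_N\in[\![W]\!]$ with $u\in[\![U|w_1]\!]$, $u'\in[\![U|w_N]\!]$, $m_{\mathscr{U}}([\![U|w_i]\!]\cap[\![U|w_{i-1}]\!])/m_{\mathscr{U}}([\![U]\!])>\delta$ for $1<i\le N$; a set is $\delta$-connected if all pairs of its points are. A $\delta$-overlap family $[\![U|W]\!]^*_\delta$ is a family of distinct subsets covering $[\![U]\!]$,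 of largest cardinality among covering families with (i) each member $\delta$-connected and containing some $[\![U|w]\!]$; (ii) distinct members $S_1,S_2$ satisfy $m_{\mathscr{U}}(S_1\cap S_2)\le\delta\,m_{\mathscr{U}}([\![U]\!])$; (iii) each $[\![U|w]\!]$ contained in some member. *)

From mathcomp Require Import all_boot all_order all_algebra.
From mathcomp Require Import all_classical all_reals.
Set Implicit Arguments. Unset Strict Implicit. Unset Printing Implicit Defensive.
Import Order.TTheory GRing.Theory Num.Theory.
Local Open Scope classical_set_scope.
Local Open Scope ring_scope.

Section UV.
Variable R : realType.

Definition uvrange (Om T : Type) (U : Om -> T) : set T := range U.

Definition condrange (Om TU TW : Type) (U : Om -> TU) (W : Om -> TW) (w : TW)
  : set TU := U @` [set o | W o = w].

Definition is_uncertainty_fun (T : Type) (m : set T -> R) : Prop :=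
  [/\ m set0 = 0,
      (forall S : set T, S !=set0 -> 0 < m S) &
      (forall S1 S2 : set T, Num.max (m S1) (m S2) <= m (S1 `|` S2))].

Definition tupleUV (Om T : Type) (n : nat) (U : 'I_n -> Om -> T) : Om -> ('I_n -> T) :=
  fun o i => U i o.

Definition prodset (T : Type) (k : nat) (S : 'I_k -> set T) : set ('I_k -> T) :=
  [set y | forall i, S i (y i)].

(* m on subsets of T, obtained from m on T^1 (identifying T with T^1) *)
Definition m1 (T : Type) (m : forall k : nat, set ('I_k -> T) -> R) (S : set T) : R :=
  m 1%N [set y | S (y ord0)].

Definition assoc (Om TU TW : Type) (mU : set TU -> R) (U : Om -> TU) (W : Om -> TW)
  : set R :=
  [set r | exists w1 w2, [/\ range W w1, range W w2, w1 <> w2 &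
     r = mU (condrange U W w1 `&` condrange U W w2) / mU (range U)]] `\` [set 0].

Definition assoc_succ (A : set R) (d : R) : Prop := A !=set0 /\ forall a, A a -> d < a.
Definition assoc_preceq (A : set R) (d : R) : Prop := forall a, A a -> a <= d.

Definition dissociated (Om TX TY : Type) (mX : set TX -> R) (mY : set TY -> R)
  (X : Om -> TX) (Y : Om -> TY) (d1 d2 : R) : Prop :=
  assoc_succ (assoc mX X Y) d1 /\ assoc_succ (assoc mY Y X) d2.
Definition associated (Om TX TY : Type) (mX : set TX -> R) (mY : set TY -> R)
  (X : Om -> TX) (Y : Om -> TY) (d1 d2 : R) : Prop :=
  assoc_preceq (assoc mX X Y) d1 /\ assoc_preceq (assoc mY Y X) d2.

Definition dconnected_pts (Om TU TW : Type) (mU : set TU -> R) (U : Om -> TU)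
  (W : Om -> TW) (d : R) (u u' : TU) : Prop :=
  exists (N : nat) (w : nat -> TW), [/\ (0 < N)%N,
    (forall i, (i < N)%N -> range W (w i)),
    condrange U W (w 0%N) u, condrange U W (w N.-1) u' &
    (forall i, (0 < i)%N -> (i < N)%N ->
       d < mU (condrange U W (w i) `&` condrange U W (w i.-1)) / mU (range U))].

Definition dconnected (Om TU TW : Type) (mU : set TU -> R) (U : Om -> TU)
  (W : Om -> TW) (d : R) (S : set TU) : Prop :=
  forall u u', S u -> S u' -> dconnected_pts mU U W d u u'.

Definition admissible_family (Om TU TW : Type) (mU : set TU -> R) (U : Om -> TU)
  (W : Om -> TW) (d : R) (F : set (set TU)) : Prop :=
  [/\ \bigcup_(S in F) S = range U,
      (forall S, F S -> dconnected mU U W d S /\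
                        exists w, range W w /\ condrange U W w `<=` S),
      (forall S1 S2, F S1 -> F S2 -> S1 <> S2 ->
                        mU (S1 `&` S2) <= d * mU (range U)) &
      (forall w, range W w -> exists S, F S /\ condrange U W w `<=` S)].

Definition overlap_family (Om TU TW : Type) (mU : set TU -> R) (U : Om -> TU)
  (W : Om -> TW) (d : R) (F : set (set TU)) : Prop :=
  admissible_family mU U W d F /\
  forall G, admissible_family mU U W d G -> (G #<= F)%card.

Definition prod_family (T : Type) (n : nat) (F : 'I_n -> set (set T))
  : set (set ('I_n -> T)) :=
  [set S | exists Si : 'I_n -> set T, (forall i, F i (Si i)) /\ S = prodset Si].

End UV.

From mathcomp Require Import all_boot all_order all_algebra.
From mathcomp Require Import all_classical all_reals.
From mathcomp Require Import lra.
From Stdlib Require Import Relations.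
Import Order.TTheory GRing.Theory Num.Theory.
Set Implicit Arguments. Unset Strict Implicit. Unset Printing Implicit Defensive.
Local Open Scope classical_set_scope.
Local Open Scope ring_scope.

(* Everything factorises coordinatewise.  Ranges and conditional ranges of
   Y(1:n) are products, so the product uncertainty assumption turns the
   relative size m(S)/m([[Y(1:n)]]) of a product set S into the product of
   the coordinate ratios.  Moving one coordinate x(i) along a step of a
   delta-chain of [[Y(i)|X(i)]] is then a step of a delta^n-chain of
   [[Y(1:n)|X(1:n)]]: the moved coordinate contributes a factor > delta, and
   every other coordinate k a factor m([[Y(k)|x(k)]])/m([[Y(k)]]), which is
   at least m([[Y(k)|x(k)]]) > delta because m([[Y(k)]]) <= 1.  Moving the
   coordinates one after the other connects any two points of a product of
   delta-connected sets.  Two distinct products of overlap-family members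
   differ in some coordinate j, whose factor is at most delta, while every
   other factor is at most dhat. *)

Section UncertaintyFun.
Variables (R : realType) (T : Type) (m : set T -> R).
Hypothesis m_unc : is_uncertainty_fun m.

Lemma uncertainty_fun_le (A B : set T) : A `<=` B -> m A <= m B.
Proof.
move=> AB; have [_ _ max_le] := m_unc.
by have := max_le A B; rewrite setUidr // ge_max => /andP[].
Qed.

Lemma uncertainty_fun_ge0 (A : set T) : 0 <= m A.
Proof. by have [m0 _ _] := m_unc; rewrite -m0 uncertainty_fun_le. Qed.

End UncertaintyFun.

Lemma is_uncertainty_fun_m1 (R : realType) (T : Type)
    (m : forall k, set ('I_k -> T) -> R) :
  is_uncertainty_fun (m 1%N) -> is_uncertainty_fun (m1 m).
Proof.
move=> [m0 m_gt0 max_le]; split; first exact: m0.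
  by move=> S [x Sx]; apply: m_gt0; exists (fun=> x).
by move=> S1 S2; apply: max_le.
Qed.

Section Chain.
Variables (R : realType) (Om TU TW : Type) (mU : set TU -> R) (U : Om -> TU)
  (W : Om -> TW) (d : R).

Definition chain_step (w w' : TW) : Prop := [/\ range W w, range W w' &
  d < mU (condrange U W w' `&` condrange U W w) / mU (range U)].

Lemma chain_range w w' :
  clos_refl_trans _ chain_step w w' -> range W w -> range W w'.
Proof.
elim=> [x y [] //| // |x y z _ IHxy _ IHyz].
by move=> /IHxy /IHyz.
Qed.

Lemma chain_dconnected_pts w w' u u' :
  range W w -> condrange U W w u -> condrange U W w' u' ->
  clos_refl_trans _ chain_step w w' -> dconnected_pts mU U W d u u'.
Proof.
move=> w_range wu w'u' /clos_rt_rt1n_iff ww'.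
suff [N [c [N_gt0 c_range c_step c0 cN]]] : exists N c, [/\ (0 < N)%N,
    forall i, (i < N)%N -> range W (c i),
    forall i, (0 < i)%N -> (i < N)%N ->
      d < mU (condrange U W (c i) `&` condrange U W (c i.-1)) / mU (range U),
    c 0%N = w & c N.-1 = w'].
  by exists N, c; split; rewrite ?c0 ?cN.
elim: ww' w_range => [x|x y z [_ y_range xy] _ IH] x_range.
  by exists 1%N, (fun=> x); split => // -[].
have [N [c [N_gt0 c_range c_step c0 cN]]] := IH y_range.
exists N.+1, (fun j => if j is j'.+1 then c j' else x); split => //.
- by case=> [|i] // /c_range.
- by case=> [|[|i]] //= _; [rewrite c0 | move=> ?; apply: c_step].
- by case: N N_gt0 cN {c_range c_step}.
Qed.

Lemma dconnected_ptsP u u' : dconnected_pts mU U W d u u' <->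
  exists w w', [/\ range W w, condrange U W w u, condrange U W w' u' &
                  clos_refl_trans _ chain_step w w'].
Proof.
split=> [|[w [w' [w_range wu w'u' ww']]]]; last first.
  exact: (chain_dconnected_pts w_range wu w'u' ww').
move=> [N [w [N_gt0 w_range wu wu' w_step]]].
exists (w 0%N), (w N.-1); split => //; first exact: w_range.
suff chain_w j : (j < N)%N -> clos_refl_trans _ chain_step (w 0%N) (w j).
  by apply: chain_w; rewrite prednK.
elim: j => [|j IHj] ltjN; first exact: rt_refl.
apply: rt_trans (IHj (ltnW ltjN)) (rt_step _ _ _ _ _).
by split; [exact/w_range/ltnW | exact: w_range | exact: w_step].
Qed.

End Chain.

Section ProdFamily.
Variables (T : Type) (n : nat).

Lemma prodsetI (A B : 'I_n -> set T) :
  prodset A `&` prodset B = prodset (fun i => A i `&` B i).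
Proof.
apply/seteqP; split=> y /=; first by move=> [Ay By] i; split.
by move=> ABy; split=> i; have [] := ABy i.
Qed.

Lemma prodsetS (A B : 'I_n -> set T) :
  (forall i, A i `<=` B i) -> prodset A `<=` prodset B.
Proof. by move=> AB y Ay i; apply/AB/Ay. Qed.

Lemma bigcup_prod_family (F : 'I_n -> set (set T)) (A : 'I_n -> set T) :
  (forall i, \bigcup_(S in F i) S = A i) ->
  \bigcup_(S in prod_family F) S = prodset A.
Proof.
move=> FA; apply/seteqP; split.
  by move=> y [_ [S [FS ->]] Sy] i; rewrite -FA; exists (S i).
move=> y Ay; have /choice [S FSy] : forall i, exists S, F i S /\ S (y i).
  by move=> i; have := Ay i; rewrite -FA => -[S]; exists S.
by exists (prodset S); [exists S; split => // i | move=> i]; case: (FSy i).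
Qed.

Lemma prod_family_supset (F : 'I_n -> set (set T)) (C : 'I_n -> set T) :
  (forall i, exists S, F i S /\ C i `<=` S) ->
  exists S, prod_family F S /\ prodset C `<=` S.
Proof.
move=> /choice [S FCS]; exists (prodset S); split.
  by exists S; split => // i; case: (FCS i).
by apply: prodsetS => i; case: (FCS i).
Qed.

End ProdFamily.

Lemma eta_with_in (I : eqType) (T : Type) (A : I -> set T) (c : I -> T) i b :
  (forall k, A k (c k)) -> A i b -> forall k, A k ([eta c with i |-> b] k).
Proof. by move=> Ac Ab k /=; case: ifP => [/eqP -> | _]; [exact: Ab | exact: Ac]. Qed.

Lemma admissible_family_sub (R : realType) (Om TU TW : Type) (mU : set TU -> R)
    (U : Om -> TU) (W : Om -> TW) (d : R) (F : set (set TU)) (S : set TU) :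
  admissible_family mU U W d F -> F S -> S `<=` range U.
Proof. by move=> [cov _ _ _] FS u Su; rewrite -cov; exists S. Qed.

Section Product.
Variables (R : realType) (Om TX TY : Type) (n : nat)
  (mY : forall k : nat, set ('I_k -> TY) -> R)
  (X : 'I_n -> Om -> TX) (Y : 'I_n -> Om -> TY).
Arguments mY : clear implicits.
Hypothesis mY1_unc : is_uncertainty_fun (mY 1%N).
Hypothesis mY1_T : mY 1%N setT = 1.
Hypothesis mY_prod : forall (k : nat) (S : 'I_k -> set TY),
  mY k (prodset S) = \prod_(i < k) m1 mY (S i).
Hypothesis rangeX : range (tupleUV X) = prodset (fun i => range (X i)).
Hypothesis condrangeY : forall x, range (tupleUV X) x ->
  condrange (tupleUV Y) (tupleUV X) x =
  prodset (fun i => condrange (Y i) (X i) (x i)).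

Let m1_unc := is_uncertainty_fun_m1 mY1_unc.

Lemma range_tupleUVP x : range (tupleUV X) x <-> forall i, range (X i) (x i).
Proof. by rewrite rangeX. Qed.

Lemma range_tupleUV_Y : range (tupleUV Y) = prodset (fun i => range (Y i)).
Proof.
apply/seteqP; split=> [_ [o _ <-] i|y Yy]; first by exists o.
have /choice [o Yo] : forall i, exists o, Y i o = y i.
  by move=> i; have [o _ <-] := Yy i; exists o.
have x_range : range (tupleUV X) (fun i => X i (o i)).
  by apply/range_tupleUVP => i; exists (o i).
have : condrange (tupleUV Y) (tupleUV X) (fun i => X i (o i)) y.
  by rewrite condrangeY // => i; exists (o i).
by case=> o' _ <-; exists o'.
Qed.

Lemma m1_range_gt0 (o : Om) i : 0 < m1 mY (range (Y i)).
Proof. by have [_ m1_gt0 _] := m1_unc; apply: m1_gt0; exists (Y i o), o. Qed.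

Lemma m1_range_le1 i : m1 mY (range (Y i)) <= 1.
Proof.
have m1T : m1 mY setT = 1 := mY1_T.
by rewrite -m1T; apply: (uncertainty_fun_le m1_unc).
Qed.

Lemma m1_ratio_ge0 i A : 0 <= m1 mY A / m1 mY (range (Y i)).
Proof. by rewrite divr_ge0 ?(uncertainty_fun_ge0 m1_unc). Qed.

Lemma m1_ratio_le1 (o : Om) i S :
  S `<=` range (Y i) -> m1 mY S / m1 mY (range (Y i)) <= 1.
Proof.
move=> S_sub; rewrite ler_pdivrMr ?m1_range_gt0 // mul1r.
exact: (uncertainty_fun_le m1_unc).
Qed.

Lemma mY_prodset_ratio (A : 'I_n -> set TY) :
  mY n (prodset A) / mY n (range (tupleUV Y)) =
  \prod_(i < n) (m1 mY (A i) / m1 mY (range (Y i))).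
Proof. by rewrite range_tupleUV_Y !mY_prod prodf_div. Qed.

Section Connectivity.
Variable delta : R.
Hypothesis delta_ge0 : 0 <= delta.
Hypothesis delta_lt_condrange : forall i x, range (X i) x ->
  delta < m1 mY (condrange (Y i) (X i) x).

Local Notation step i := (chain_step (m1 mY) (Y i) (X i) delta).
Local Notation stepn := (chain_step (mY n) (tupleUV Y) (tupleUV X) (delta ^+ n)).

Lemma chain_step_update (c : 'I_n -> TX) i b :
  (forall k, range (X k) (c k)) -> step i (c i) b ->
  stepn c [eta c with i |-> b].
Proof.
move=> c_range [_ b_range cb].
have cb_range : range (tupleUV X) [eta c with i |-> b].
  by apply/range_tupleUVP; apply: (eta_with_in (A := fun k => range (X k))).
split=> //; first exact/range_tupleUVP.
rewrite !condrangeY //; last exact/range_tupleUVP.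
have -> : delta ^+ n = \prod_(k < n) delta by rewrite prodr_const card_ord.
rewrite prodsetI mY_prodset_ratio.
apply: ltr_prod => [|k _]; first by apply/hasP; exists i; rewrite ?mem_index_enum.
rewrite delta_ge0 /=; case: eqP => [-> //|_]; rewrite setIid.
have [o _ _] := c_range k; have r_gt0 := m1_range_gt0 o k.
apply: lt_le_trans (delta_lt_condrange (c_range k)) _.
rewrite ler_pdivlMr //.
have := uncertainty_fun_ge0 m1_unc (condrange (Y k) (X k) (c k)).
have := m1_range_le1 k; nra.
Qed.

Lemma chain_update i a b : clos_refl_trans _ (step i) a b ->
  forall c : 'I_n -> TX, (forall k, range (X k) (c k)) -> c i = a ->
  clos_refl_trans _ stepn c [eta c with i |-> b].
Proof.
elim=> [x y xy|x|x y z xy IHxy _ IHyz] c c_range ci.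
- by apply: rt_step; apply: chain_step_update; rewrite ?ci.
- have -> : [eta c with i |-> x] = c :> ('I_n -> TX).
    by apply/funext => k /=; case: eqP => [->|].
  exact: rt_refl.
- have y_range : range (X i) y by apply: chain_range xy _; rewrite -ci.
  have cy_range := eta_with_in (A := fun k => range (X k)) c_range y_range.
  apply: rt_trans (IHxy c c_range ci) _.
  have -> : [eta c with i |-> z] =
      [eta [eta c with i |-> y] with i |-> z] :> ('I_n -> TX).
    by apply/funext => k /=; case: eqP.
  by apply: IHyz cy_range _; rewrite /= eqxx.
Qed.

Lemma chain_prod (a b : 'I_n -> TX) :
  (forall k, range (X k) (a k)) ->
  (forall k, clos_refl_trans _ (step k) (a k) (b k)) ->
  clos_refl_trans _ stepn a b.
Proof.
move=> a_range ab.
pose mix m : 'I_n -> TX := fun k => if (k < m)%N then b k else a k.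
have mix_range m k : range (X k) (mix m k).
  by rewrite /mix; case: ifP => // _; apply: chain_range (ab k) (a_range k).
suff chain_mix m : clos_refl_trans _ stepn a (mix m).
  have := chain_mix n; congr (clos_refl_trans _ _ _ _).
  by apply/funext => k; rewrite /mix ltn_ord.
elim: m => [|m IHm].
  by have -> : mix 0%N = a by []; exact: rt_refl.
have [ltmn|lenm] := ltnP m n; last first.
  have -> : mix m.+1 = mix m.
    by apply/funext => k; rewrite /mix !(leq_trans (ltn_ord k)) // ltnW.
  exact: IHm.
pose i := Ordinal ltmn.
have -> : mix m.+1 = [eta mix m with i |-> b i] :> ('I_n -> TX).
  apply/funext => k /=; rewrite /mix ltnS leq_eqVlt.
  case: eqP => [km|kNm]; first by rewrite (_ : k = i) ?eqxx //; apply: val_inj.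
  by case: eqP => // ki; case: kNm; rewrite ki.
apply: rt_trans IHm (chain_update (ab i) (mix_range m) _).
by rewrite /mix ltnn.
Qed.

Lemma dconnected_prodset (S : 'I_n -> set TY) :
  (forall i, dconnected (m1 mY) (Y i) (X i) delta (S i)) ->
  dconnected (mY n) (tupleUV Y) (tupleUV X) (delta ^+ n) (prodset S).
Proof.
move=> S_conn u u' Su Su'.
have /choice [w w_ok] : forall i, exists ww' : TX * TX,
    [/\ range (X i) ww'.1, condrange (Y i) (X i) ww'.1 (u i),
        condrange (Y i) (X i) ww'.2 (u' i) &
        clos_refl_trans _ (step i) ww'.1 ww'.2].
  move=> i; have /dconnected_ptsP [a [b ?]] := S_conn i _ _ (Su i) (Su' i).
  by exists (a, b).
have a_range k : range (X k) (w k).1 by case: (w_ok k).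
have b_range k : range (X k) (w k).2.
  by case: (w_ok k) => ? _ _ ab; apply: chain_range ab _.
apply/dconnected_ptsP; exists (fun k => (w k).1), (fun k => (w k).2); split.
- exact/range_tupleUVP.
- by rewrite condrangeY; [move=> i; case: (w_ok i) | exact/range_tupleUVP].
- by rewrite condrangeY; [move=> i; case: (w_ok i) | exact/range_tupleUVP].
- by apply: chain_prod => // k; case: (w_ok k).
Qed.

End Connectivity.

Lemma prod_family_overlap_le (o : Om) (delta dh : R) (F : 'I_n -> set (set TY))
    (S1 S2 : set ('I_n -> TY)) :
  (forall i, admissible_family (m1 mY) (Y i) (X i) delta (F i)) ->
  (forall i S, F i S -> m1 mY S / m1 mY (range (Y i)) <= dh) ->
  prod_family F S1 -> prod_family F S2 -> S1 <> S2 ->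
  mY n (S1 `&` S2) / mY n (range (tupleUV Y)) <= delta * dh ^+ n.-1.
Proof.
move=> F_adm dh_ub [A [FA ->]] [B [FB ->]] AB.
have [j ABj] : exists j, A j <> B j.
  apply: contrapT => /forallNP AB_eq; apply/AB; congr prodset.
  by apply/funext => j; apply: contrapT; apply: AB_eq.
have r_gt0 := m1_range_gt0 o.
rewrite prodsetI mY_prodset_ratio (bigD1 j) //=.
apply: ler_pM.
- exact: m1_ratio_ge0.
- by apply: prodr_ge0 => *; apply: m1_ratio_ge0.
- by have [_ _ overlap _] := F_adm j; rewrite ler_pdivrMr //; apply: overlap.
- apply: le_trans (_ : \prod_(i < n | i != j) dh <= _); last first.
    by rewrite prodr_const cardC1 card_ord.
  apply: ler_prod => i _; rewrite m1_ratio_ge0 /=.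
  apply: le_trans (dh_ub _ _ (FA i)).
  by rewrite ler_pM2r ?invr_gt0 //; apply: (uncertainty_fun_le m1_unc) => y [].
Qed.
End Product.

Theorem lemma2 (R : realType) (Om TX TY : Type) (n : nat)
  (mX : forall k : nat, set ('I_k -> TX) -> R)
  (mY : forall k : nat, set ('I_k -> TY) -> R)
  (X : 'I_n -> Om -> TX) (Y : 'I_n -> Om -> TY)
  (delta : R) (F : 'I_n -> set (set TY)) :
  (forall k, is_uncertainty_fun (mX k)) ->
  (forall k, is_uncertainty_fun (mY k)) ->
  (forall k, mY k setT = 1) ->
  (* product uncertainty assumption *)
  (forall (k : nat) (S : 'I_k -> set TY),
      mY k (prodset S) = \prod_(i < k) m1 mY (S i)) ->
  (* [[X(1:n)]] = [[X(1)]] x ... x [[X(n)]] *)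
  range (tupleUV X) = prodset (fun i => range (X i)) ->
  (* [[Y(1:n)|x(1:n)]] = [[Y(1)|x(1)]] x ... x [[Y(n)|x(n)]] *)
  (forall x, range (tupleUV X) x ->
     condrange (tupleUV Y) (tupleUV X) x =
     prodset (fun i => condrange (Y i) (X i) (x i))) ->
  0 <= delta ->
  (* delta < min_{i, x(i) in [[X(i)]]} m_Y([[Y(i)|x(i)]]) (the minimum exists) *)
  (exists (i0 : 'I_n) (x0 : TX), [/\ range (X i0) x0,
     (forall (i : 'I_n) (x : TX), range (X i) x ->
        m1 mY (condrange (Y i0) (X i0) x0) <= m1 mY (condrange (Y i) (X i) x)) &
     delta < m1 mY (condrange (Y i0) (X i0) x0)]) ->
  (dissociated (mX n) (mY n) (tupleUV X) (tupleUV Y) 0 (delta ^+ n) \/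
   associated (mX n) (mY n) (tupleUV X) (tupleUV Y) 1 (delta ^+ n)) ->
  (forall i, overlap_family (m1 mY) (Y i) (X i) delta (F i)) ->
  let PF := prod_family F in
  let dhat := sup [set r | exists (i : 'I_n) (S : set TY),
                     F i S /\ r = m1 mY S / m1 mY (range (Y i))] in
  [/\ \bigcup_(S in PF) S = range (tupleUV Y),
      (forall S, PF S ->
         dconnected (mY n) (tupleUV Y) (tupleUV X) (delta ^+ n) S /\
         exists x, range (tupleUV X) x /\ condrange (tupleUV Y) (tupleUV X) x `<=` S),
      (forall x, range (tupleUV X) x ->
         exists S, PF S /\ condrange (tupleUV Y) (tupleUV X) x `<=` S) &
      (forall S1 S2, PF S1 -> PF S2 -> S1 <> S2 ->
         mY n (S1 `&` S2) / mY n (range (tupleUV Y)) <= delta * dhat ^+ n.-1)].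
Proof.
(* Neither the association hypothesis nor m_X enters the argument. *)
move=> _ mY_unc mY_T mY_prod rangeX condrangeY delta_ge0
  [i0 [x0 [x0_range x0_min delta_lt]]] _ F_ovl PF dhat.
have F_adm i := (F_ovl i).1.
have [o _ _] := x0_range.
have rangeXP := range_tupleUVP rangeX.
have delta_lt_condrange i x :
    range (X i) x -> delta < m1 mY (condrange (Y i) (X i) x).
  by move=> /x0_min; apply: lt_le_trans.
split.
- rewrite (range_tupleUV_Y rangeX condrangeY).
  by apply: bigcup_prod_family => i; case: (F_adm i).
- move=> _ [S [FS ->]]; split.
    apply: dconnected_prodset => // i.
    by case: (F_adm i) => _ /(_ _ (FS i)) [].
  have /choice [w w_ok] : forall i,
      exists w, range (X i) w /\ condrange (Y i) (X i) w `<=` S i.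
    by move=> i; case: (F_adm i) => _ /(_ _ (FS i)) [].
  have w_range : range (tupleUV X) w by apply/rangeXP => // i; case: (w_ok i).
  by exists w; split; rewrite // condrangeY //; apply: prodsetS => i; case: (w_ok i).
- move=> x x_range; rewrite condrangeY //; apply: prod_family_supset => i.
  by case: (F_adm i) => _ _ _; apply; move/rangeXP: x_range.
- move=> S1 S2 PS1 PS2 S12.
  apply: (prod_family_overlap_le (mY_unc 1%N) mY_prod rangeX condrangeY o F_adm
    _ PS1 PS2 S12) => i S FS.
  apply: sup_upper_bound; last by exists i, S.
  split; first by exists (m1 mY S / m1 mY (range (Y i))), i, S.
  exists 1 => _ [k [S' [FS' ->]]].
  exact/(m1_ratio_le1 _ o)/(admissible_family_sub (F_adm k)).
Qed.
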